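(* For every quasiordered set $(A,\gamma)$, $$\mathrm{hsdim}(A,\gamma)\le\dim\bigl(A/(\gamma\cap\gamma^{-1}),r_\gamma\bigr).$$
   Context: A quasiorder on $A$ is a reflexive and transitive relation; $\Delta_A=\{(a,a)\mid a\in A\}$. A quasiorder $\alpha$ on $A$ is a half-space if there is a quasiorder $\beta$ on $A$ with $\alpha\cup\beta=A\times A$ and $\alpha\cap\beta=\Delta_A$. A half-space realizer of a quasiorder $\gamma$ on $A$ is a set $\{\alpha_i\mid i\in I\}$ of half-spaces on $A$ with $\bigcap_{i\in I}\alpha_i=\gamma$; the half-space dimension $\mathrm{hsdim}(A,\gamma)$ is the minimum cardinality of a half-space realizer of $\gamma$. For a quasiorder $\gamma$, $r_\gamma$ is the induced partial order on $A/(\gamma\cap\gamma^{-1})$: $([a],[b])\in r_\gamma$ iff $(a,b)\in\gamma$. For a partial order, $\dim$ denotes the order dimension: the least cardinality of a set of linear extensions whose intersection is the partial order. *)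

Set Implicit Arguments.
Unset Strict Implicit.

Definition relA (A : Type) := A -> A -> Prop.

Definition quasiorder (A : Type) (g : relA A) : Prop :=
  (forall a, g a a) /\ (forall a b c, g a b -> g b c -> g a c).

Definition half_space (A : Type) (alpha : relA A) : Prop :=
  quasiorder alpha /\
  exists beta : relA A, quasiorder beta /\
    (forall a b, alpha a b \/ beta a b) /\
    (forall a b, (alpha a b /\ beta a b) <-> a = b).

Definition hs_realizer (A : Type) (gamma : relA A) (H : relA A -> Prop) : Prop :=
  (forall alpha, H alpha -> half_space alpha) /\
  (forall a b, gamma a b <-> (forall alpha, H alpha -> alpha a b)).

Definition card_le (T U : Type) (X : T -> Prop) (Y : U -> Prop) : Prop :=
  exists f : {x : T | X x} -> {y : U | Y y},
    forall u v, f u = f v -> u = v.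

Definition qclass (A : Type) (gamma : relA A) (a : A) : A -> Prop :=
  fun x => gamma a x /\ gamma x a.

Definition quot (A : Type) (gamma : relA A) : Type :=
  {C : A -> Prop | exists a, C = qclass gamma a}.

Definition r_rel (A : Type) (gamma : relA A) : relA (quot gamma) :=
  fun C D => exists a b, proj1_sig C = qclass gamma a /\
                         proj1_sig D = qclass gamma b /\ gamma a b.

Definition linear_extension (T : Type) (r l : relA T) : Prop :=
  (forall x, l x x) /\
  (forall x y, l x y -> l y x -> x = y) /\
  (forall x y z, l x y -> l y z -> l x z) /\
  (forall x y, l x y \/ l y x) /\
  (forall x y, r x y -> l x y).

Definition order_realizer (T : Type) (r : relA T) (L : relA T -> Prop) : Prop :=
  (forall l, L l -> linear_extension r l) /\
  (forall x y, r x y <-> (forall l, L l -> l x y)).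

(** Composing a realizer of the order [r_gamma] with the quotient map
    [a |-> [a]] gives the realizer.  The preimage of a linear order [l]
    under any map [f] is a half-space, with complementary quasiorder
    "[a = b], or [f a] lies strictly above [f b]"; and since
    [gamma a b <-> r_gamma [a] [b]], the preimages of a realizer of [r_gamma]
    intersect to [gamma].  Taking preimages cannot increase cardinality. *)

From Stdlib Require Import Classical ClassicalEpsilon ProofIrrelevance.
Set Implicit Arguments.
Unset Strict Implicit.

Definition preimage_rel (A T : Type) (f : A -> T) (l : relA T) : relA A :=
  fun a b => l (f a) (f b).

Lemma half_space_preimage_total_order (A T : Type) (f : A -> T) (l : relA T) :
  (forall x, l x x) ->
  (forall x y, l x y -> l y x -> x = y) ->
  (forall x y z, l x y -> l y z -> l x z) ->
  (forall x y, l x y \/ l y x) ->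
  half_space (preimage_rel f l).
Proof.
  intros l_refl l_anti l_trans l_total; unfold preimage_rel; split.
  { split; [intro; apply l_refl | intros a b c; apply l_trans]. }
  exists (fun a b => a = b \/ (l (f b) (f a) /\ f a <> f b)).
  split; [split | split].
  - intro; left; reflexivity.
  - intros a b c [-> | [lba neq_ab]] [-> | [lcb neq_bc]]; auto.
    right; split; [eauto |].
    intro eq_ac; rewrite eq_ac in neq_ab.
    apply neq_ab, l_anti; [exact lcb | rewrite <- eq_ac; exact lba].
  - intros a b.
    destruct (classic (l (f a) (f b))) as [lab | nlab]; [left; exact lab |].
    right; right.
    destruct (l_total (f a) (f b)) as [lab | lba]; [contradiction |].
    split; [exact lba |].
    intro eq_ab; apply nlab; rewrite eq_ab; apply l_refl.
  - intros a b; split.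
    + intros [lab [-> | [lba neq_ab]]]; [reflexivity |].
      exfalso; apply neq_ab, l_anti; assumption.
    + intros ->; split; [apply l_refl | left; reflexivity].
Qed.

Definition image_set (T U : Type) (F : T -> U) (X : T -> Prop) : U -> Prop :=
  fun y => exists x, X x /\ y = F x.

Lemma card_le_image (T U : Type) (F : T -> U) (X : T -> Prop) :
  card_le (image_set F X) X.
Proof.
  assert (preimage : forall u : {y | image_set F X y},
             {x | X x /\ proj1_sig u = F x}).
  { intros [y Hy]; apply constructive_indefinite_description; exact Hy. }
  exists (fun u => exist _ (proj1_sig (preimage u)) (proj1 (proj2_sig (preimage u)))).
  intros u v eq_pre; injection eq_pre as eq_pre.
  destruct (proj2_sig (preimage u)) as [_ Fy], (proj2_sig (preimage v)) as [_ Fz].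
  destruct u as [y Hy], v as [z Hz]; simpl in *.
  assert (y = z) by (rewrite Fy, Fz, eq_pre; reflexivity); subst z.
  f_equal; apply proof_irrelevance.
Qed.

Definition cls (A : Type) (gamma : relA A) (a : A) : quot gamma :=
  exist _ (qclass gamma a) (ex_intro _ a eq_refl).

Lemma r_rel_cls (A : Type) (gamma : relA A) (a b : A) :
  quasiorder gamma -> @r_rel A gamma (cls gamma a) (cls gamma b) <-> gamma a b.
Proof.
  intros [g_refl g_trans]; split.
  - intros [a' [b' [cls_a [cls_b g_ab']]]]; simpl in cls_a, cls_b.
    assert (a_a' : qclass gamma a' a) by (rewrite <- cls_a; split; apply g_refl).
    assert (b_b' : qclass gamma b' b) by (rewrite <- cls_b; split; apply g_refl).
    destruct a_a' as [_ g_aa']; destruct b_b' as [g_b'b _]; eauto.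
  - intro g_ab; exists a, b; repeat split; assumption.
Qed.

Theorem corollary2p10 (A : Type) (gamma : relA A) :
  quasiorder gamma ->
  forall L : relA (quot gamma) -> Prop,
    order_realizer (@r_rel A gamma) L ->
    exists H : relA A -> Prop, @hs_realizer A gamma H /\ card_le H L.
Proof.
  intros qo_gamma L [L_lin L_meet].
  exists (image_set (preimage_rel (cls gamma)) L).
  split; [split |].
  - intros alpha [l [Ll ->]].
    destruct (L_lin l Ll) as [l_refl [l_anti [l_trans [l_total _]]]].
    now apply half_space_preimage_total_order.
  - intros a b; rewrite <- (r_rel_cls a b qo_gamma), L_meet; split.
    + intros l_ab alpha [l [Ll ->]]; exact (l_ab l Ll).
    + intros alpha_ab l Ll; apply (alpha_ab (preimage_rel (cls gamma) l)).
      exists l; split; [exact Ll | reflexivity].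
  - apply card_le_image.
Qed.
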